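(* Let $(p_n)$ be a sequence in $(0,1)$ such that $\lim_{n\to\infty} p_n\log n=\alpha$ exists, let $L$ and $k$ be positive integers, and let $q_{k,n}=\Pr\left(\frac{k-1}{L}\le \frac{N_1}{\log n}<\frac{k}{L}\right)$ where $N_1\sim\mathrm{Geometric}(p_n)$. Let $\mathcal Y_k$ be the collection of output fragments $\vec Y_i$ of the torn-paper channel (block length $n$, tearing probability $p_n$) whose underlying fragment length $N_{\pi_i}$ satisfies $\frac{k-1}{L}\log n\le N_{\pi_i}<\frac{k}{L}\log n$, and let $|\mathcal Y_k|$ be the number of such fragments. Then for any $\epsilon>0$ and all $n$ large enough, $$\Pr\left(\big||\mathcal Y_k| - n p_n q_{k,n}\big| > \epsilon n p_n\right)\le 4e^{-n p_n^2\epsilon^2/4}.$$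
   Context: Logarithms are base 2. The torn-paper channel with block length $n$ and tearing probability $p_n$: the input $X^n\in\{0,1\}^n$ is cut into consecutive fragments $\vec X_1,\dots,\vec X_K$, where $N_1,N_2,\dots$ are i.i.d. $\mathrm{Geometric}(p_n)$ (support $\{1,2,\dots\}$, mean $1/p_n$), $K$ is the smallest index with $\sum_{i=1}^K N_i\ge n$, $\vec X_i$ consists of positions $1+\sum_{j<i}N_j$ through $\sum_{j\le i}N_j$ for $i<K$, and $\vec X_K$ of positions $1+\sum_{j<K}N_j$ through $n$ (equivalently, a cut is placed independently between each pair of consecutive bits with probability $p_n$, so $K=1+\sum_{i=2}^n T_i$ with $T_i$ i.i.d. $\mathrm{Bernoulli}(p_n)$). Given $K$, $\pi$ is a uniformly random permutation of $\{1,\dots,K\}$ and the output is the unordered collection $\{\vec Y_1,\dots,\vec Y_K\}$ with $\vec Y_i=\vec X_{\pi_i}$. *)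

From HB Require Import structures.
From mathcomp Require Import all_boot all_order all_algebra.
From mathcomp Require Import all_classical all_reals all_analysis.
Set Implicit Arguments. Unset Strict Implicit. Unset Printing Implicit Defensive.
Import Order.TTheory GRing.Theory Num.Theory.
Import numFieldNormedType.Exports.
Local Open Scope classical_set_scope.
Local Open Scope ring_scope.

Definition log2 {R : realType} (x : R) : R := ln x / ln 2.

Definition geom_pmf {R : realType} (p : R) (j : nat) : R :=
  if j is j'.+1 then p * (1 - p) ^+ j' else 0.

(* (N i)_{i : nat} (N 0 = N_1, N 1 = N_2, ...) are i.i.d. *)
Definition iid_geometric {R : realType} (d : measure_display) (T : measurableType d)
  (P : probability T R) (p : R) (N : nat -> T -> nat) : Prop :=
  forall (m : nat) (a : 'I_m -> nat),
    measurable [set w | forall i : 'I_m, N i w = a i] /\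
    P [set w | forall i : 'I_m, N i w = a i] = (\prod_(i < m) geom_pmf p (a i))%:E.

(* number of fragments K for block length n: the smallest K >= 1 with
   N_1 + ... + N_K >= n (0-indexed: sum_(i < K) N i >= n). When all N i >= 1
   (almost surely) the search within K <= n always succeeds. *)
Definition num_frags (n : nat) (Nw : nat -> nat) : nat :=
  (find (fun m => n <= \sum_(i < m.+1) Nw i)%N (iota 0 n)).+1.

Definition in_class {R : realType} (n L k : nat) (len : nat) : bool :=
  ((k.-1)%:R / L%:R * log2 (n%:R : R) <= len%:R) && (len%:R < k%:R / L%:R * log2 (n%:R : R)).

(* |Y_k| : number of fragments i in 1..K whose underlying length N_i is in class k
   (the random permutation pi does not affect this count). *)
Definition card_Yk {R : realType} (n L k : nat) (Nw : nat -> nat) : nat :=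
  count (fun i => @in_class R n L k (Nw i)) (iota 0 (num_frags n Nw)).

From HB Require Import structures.
From mathcomp Require Import all_boot all_order all_algebra.
From mathcomp Require Import all_classical all_reals all_analysis.
From mathcomp Require Import ring lra.
Import Order.TTheory GRing.Theory Num.Theory.
Import numFieldNormedType.Exports.
Local Open Scope classical_set_scope.
Local Open Scope ring_scope.

(* Write mu = n p and let q be the probability that a piece lies in the length class.
   The number K of fragments concentrates around mu: K <= m2 unless the first
   m2 ~ mu (1 + delta) pieces have total length below n, and K > m1 unless the first
   m1 ~ mu (1 - delta) pieces already have total length at least n.  When
   m1 < K <= m2, |Y_k| lies between the numbers of class pieces among the first
   m1 + 1 and among the first m2 pieces, sums of i.i.d. indicators whose means are
   within eps mu / 2 of mu q.  Chernoff's method, applied to the exact product law of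
   finitely many i.i.d. geometric lengths, bounds each of these four deviations by
   exp (- mu e^2 / 80) with e = min eps 1.  As p_n log n converges, p_n -> 0, so this
   exponent eventually dominates n p_n^2 eps^2 / 4; when n p_n is too small for the
   argument, the claimed bound exceeds 1 anyway. *)

(** * Counting fragments *)

Section NumFrags.
Context {n : nat}.

Lemma num_frags_leS (g : nat -> nat) : (num_frags n g <= n.+1)%N.
Proof.
rewrite /num_frags ltnS.
by have := find_size (fun m => n <= \sum_(i < m.+1) g i)%N (iota 0 n); rewrite size_iota.
Qed.

Lemma eq_num_frags (g h : nat -> nat) :
  (forall i, (i <= n)%N -> g i = h i) -> num_frags n g = num_frags n h.
Proof.
move=> gh; rewrite /num_frags; congr S; apply: eq_in_find => m.
rewrite mem_iota add0n => /= mn; congr (n <= _)%N.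
apply: eq_bigr => i _; apply: gh.
by apply: leq_trans (ltnW mn); rewrite -ltnS.
Qed.

Lemma num_frags_le (g : nat -> nat) m :
  (0 < m)%N -> (m <= n)%N -> (n <= \sum_(i < m) g i)%N -> (num_frags n g <= m)%N.
Proof.
move=> m0 mn ns; rewrite /num_frags -(prednK m0) ltnS leqNgt.
apply/negP => /(before_find 0); rewrite nth_iota ?add0n ?prednK //.
by rewrite ns.
Qed.

Lemma num_frags_gt (g : nat -> nat) m :
  (m < n)%N -> (\sum_(i < m) g i < n)%N -> (m < num_frags n g)%N.
Proof.
move=> mn ns; rewrite /num_frags ltnS leqNgt; apply/negP => fm.
have fn : (find (fun m => n <= \sum_(i < m.+1) g i)%N (iota 0 n) < n)%N.
  exact: ltn_trans fm mn.
have hs : has (fun m => n <= \sum_(i < m.+1) g i)%N (iota 0 n).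
  by rewrite has_find size_iota.
have := nth_find 0 hs; rewrite nth_iota ?add0n //; set j := find _ _ => nj.
have : (\sum_(i < j.+1) g i <= \sum_(i < m) g i)%N.
  rewrite (big_ord_widen _ g fm) [leqRHS](bigID (fun i : 'I_m => i < j.+1)%N) /=.
  exact: leq_addr.
by move=> /(leq_trans nj); rewrite leqNgt ns.
Qed.

Lemma num_frags_cases (g : nat -> nat) {m1 m2 : nat} :
  (0 < m2)%N -> (m2 <= n)%N -> (m1 < n)%N ->
  [\/ (\sum_(i < m2) g i < n)%N, (n <= \sum_(i < m1) g i)%N |
      (m1 < num_frags n g <= m2)%N].
Proof.
move=> m20 m2n m1n.
case: (ltnP (\sum_(i < m2) g i) n) => [|sum2]; first by constructor 1.
case: (leqP n (\sum_(i < m1) g i)) => [|sum1]; first by constructor 2.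
by constructor 3; rewrite num_frags_gt // num_frags_le.
Qed.

End NumFrags.

Lemma natr_count_iota (R : numDomainType) (C : pred nat) (g : nat -> nat) m :
  (count (fun i => C (g i)) (iota 0 m))%:R = \sum_(i < m) (C (g i))%:R :> R.
Proof.
rewrite -sum1_count natr_sum big_mkcond /= -/(index_iota 0 m) -{1}(subn0 m).
by rewrite big_mkord; apply: eq_bigr => i _; case: (C (g i)).
Qed.

Lemma count_frags_deviation {R : realFieldType} {n : nat} (C : pred nat)
    (g : nat -> nat) {mu q eps s : R} {m1 m2 : nat} :
  (0 < m2)%N -> (m2 <= n)%N -> (m1 < n)%N -> 0 <= q ->
  (m2%:R - mu) * q <= eps * mu - s -> (mu - m1.+1%:R) * q <= eps * mu - s ->
  eps * mu < `|(count (fun i => C (g i)) (iota 0 (num_frags n g)))%:R - mu * q| ->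
  [\/ (\sum_(i < m2) g i <= n)%N, (n <= \sum_(i < m1) g i)%N,
      m2%:R * q + s <= \sum_(i < m2) (C (g i))%:R |
      \sum_(i < m1.+1) (C (g i))%:R <= m1.+1%:R * q - s].
Proof.
move=> m20 m2n m1n q0 dev2 dev1.
have count_mono a b : (a <= b)%N ->
    (count (fun i => C (g i)) (iota 0 a) <= count (fun i => C (g i)) (iota 0 b))%N.
  by move=> ab; rewrite -(subnKC ab) iotaD count_cat leq_addr.
have [/ltnW|sum1|/andP[K1 K2]] := num_frags_cases g m20 m2n m1n.
- by constructor 1.
- by constructor 2.
have := count_mono _ _ K1; have := count_mono _ _ K2.
rewrite -!(ler_nat R) !natr_count_iota ltr_normr => c2 c1 /orP[dev|dev].
- by constructor 3; lra.
- by constructor 4; lra.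
Qed.

Lemma eq_card_Yk {R : realType} (n L k : nat) {g h : nat -> nat} :
  (forall i, (i < n.+1)%N -> g i = h i) -> @card_Yk R n L k g = @card_Yk R n L k h.
Proof.
move=> gh; rewrite /card_Yk (@eq_num_frags n g h) //; apply: eq_in_count => i.
by rewrite mem_iota add0n /= => iK; rewrite gh // (leq_trans iK (num_frags_leS h)).
Qed.

Lemma in_class_lt {R : realType} (n L k j : nat) : @in_class R n L k j ->
  (j < (Num.truncn (k%:R / L%:R * log2 (n%:R : R))).+1)%N.
Proof.
case/andP => _ j_lt; rewrite -(ltr_nat R).
exact: lt_trans j_lt (truncnS_gt _).
Qed.

(** * Exponential moments of the geometric law *)

Lemma expR_le_inv1B {R : realType} (a : R) : a < 1 -> expR a <= (1 - a)^-1.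
Proof.
move=> a1; have := expR_ge1Dx (- a); rewrite expRN => le_inv.
by rewrite -[expR a]invrK lef_pV2 ?posrE ?invr_gt0 ?expR_gt0 ?subr_gt0 // addrC.
Qed.

Lemma expR_le1Dx_sqr {R : realType} (a : R) : a <= 1 / 2 -> expR a <= 1 + a + 2 * a ^+ 2.
Proof.
move=> a_le; apply: le_trans (_ : (1 - a)^-1 <= _); first by rewrite expR_le_inv1B //; lra.
have -> : (1 - a)^-1 = 1 + a + a ^+ 2 / (1 - a) by field; lra.
rewrite lerD2l ler_pdivrMr; last by lra.
by have := sqr_ge0 a; nra.
Qed.

Section GeometricPmf.
Context {R : realType} {p : R}.
Hypothesis p01 : 0 < p < 1.

Lemma geom_pmf_ge0 j : 0 <= geom_pmf p j.
Proof.
case/andP: p01 => p0 p1; case: j => [|j] //=.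
by rewrite mulr_ge0 ?exprn_ge0 ?subr_ge0 ?ltW.
Qed.

Lemma geom_partial_pgf_le (y : R) K : 0 <= y -> (1 - p) * y < 1 ->
  \sum_(j < K) geom_pmf p j * y ^+ j <= p * y / (1 - (1 - p) * y).
Proof.
case/andP: p01 => p0 p1 y0; set r := (1 - p) * y => r1.
have r0 : 0 <= r by rewrite mulr_ge0 // subr_ge0 ltW.
case: K => [|K]; first by rewrite big_ord0 divr_ge0 ?mulr_ge0 //; lra.
rewrite big_ord_recl mul0r add0r.
have -> : \sum_(i < K) geom_pmf p (bump 0 i) * y ^+ bump 0 i =
          p * y * \sum_(i < K) r ^+ i.
  rewrite mulr_sumr; apply: eq_bigr => i _.
  by rewrite /bump /= add1n exprS exprMn /r; ring.
apply: ler_wpM2l; first by rewrite mulr_ge0 // ltW.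
rewrite -[leRHS]mul1r ler_pdivlMr ?subr_gt0 // mulrC.
by rewrite -opprB mulNr -subrX1 opprB lerBlDr lerDl exprn_ge0.
Qed.

Lemma sum_geom_pmf_le1 K : \sum_(j < K) geom_pmf p j <= 1.
Proof.
case/andP: p01 => p0 p1.
have := @geom_partial_pgf_le 1 K ler01; rewrite !mulr1 subKr divff ?gt_eqF //.
by under eq_bigr do rewrite expr1n mulr1; apply; lra.
Qed.

Lemma geom_mgf_neg_le (c : R) K : 0 < c ->
  \sum_(j < K) geom_pmf p j * expR (- (j%:R * (c * p))) <= expR (- (c / (1 + c))).
Proof.
case/andP: p01 => p0 p1 c0; set l := c * p.
have l0 : 0 < l by rewrite mulr_gt0.
have el : 1 + l <= expR l by exact: expR_ge1Dx.
have y1 : expR (- l) <= 1 by rewrite -expR0 ler_expR; lra.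
have r1 : (1 - p) * expR (- l) < 1 by nra.
under eq_bigr do rewrite -mulrN expRM_natl.
apply: le_trans (geom_partial_pgf_le _ K (expR_ge0 _) r1) _.
apply: le_trans (_ : (1 + c)^-1 <= _); last first.
  apply: le_trans (expR_ge1Dx _); rewrite le_eqVlt; apply/orP; left; apply/eqP.
  by field; lra.
have -> : (1 + c)^-1 = p / (l + p) by rewrite /l; field; apply/andP; split; nra.
have z0 : 0 < expR l by exact: expR_gt0.
rewrite expRN.
have -> : p * (expR l)^-1 / (1 - (1 - p) * (expR l)^-1) = p / (expR l - 1 + p).
  by field; rewrite !gt_eqF //; lra.
by rewrite ler_pM2l // lef_pV2 ?posrE; lra.
Qed.

Lemma geom_mgf_pos_le (c : R) K : 0 < c < 1 ->
  \sum_(j < K) geom_pmf p j * expR (j%:R * (c * p)) <= expR (c / (1 - c)).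
Proof.
case/andP: p01 => p0 p1 /andP[c0 c1]; set l := c * p.
have l0 : 0 < l by rewrite mulr_gt0.
have lp : l < p by rewrite /l; nra.
have zl : expR l * (1 - l) <= 1.
  by rewrite -ler_pdivlMr ?mul1r ?expR_le_inv1B //; lra.
have r1 : (1 - p) * expR l < 1 by have := expR_gt0 l; nra.
under eq_bigr do rewrite expRM_natl.
apply: le_trans (geom_partial_pgf_le _ K (expR_ge0 _) r1) _.
apply: le_trans (_ : (1 - c)^-1 <= _); last first.
  apply: le_trans (expR_ge1Dx _); rewrite le_eqVlt; apply/orP; left; apply/eqP.
  by field; lra.
have -> : (1 - c)^-1 = p / (p - l) by rewrite /l; field; apply/andP; split; nra.
rewrite ler_pdivrMr; last by lra.
by rewrite mulrAC ler_pdivlMr; [nra | lra].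
Qed.

Lemma geom_mgf_indicator_le (C : pred nat) (a : R) K :
  \sum_(j < K) geom_pmf p j * expR (a * (C j)%:R) <=
  expR ((expR a - 1) * \sum_(j < K | C j) geom_pmf p j).
Proof.
have -> : \sum_(j < K) geom_pmf p j * expR (a * (C j)%:R) =
    \sum_(j < K) geom_pmf p j + (expR a - 1) * \sum_(j < K | C j) geom_pmf p j.
  rewrite mulr_sumr [X in _ = _ + X]big_mkcond -big_split; apply: eq_bigr => j _.
  by case: (C j); rewrite /= ?mulr1 ?mulr0 ?expR0 ?addr0 //; ring.
by apply: le_trans (expR_ge1Dx _); rewrite lerD2r sum_geom_pmf_le1.
Qed.

End GeometricPmf.

(** * Events of finitely many i.i.d. geometric lengths *)

Lemma finite_chernoff {R : realType} (M K : nat) (w g : nat -> R) (c : R) :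
  (forall j, 0 <= w j) ->
  \sum_(f : {ffun 'I_M -> 'I_K} | c <= \sum_(i < M) g (f i)) \prod_(i < M) w (f i)
    <= expR (- c) * (\sum_(j < K) w j * expR (g j)) ^+ M.
Proof.
move=> w0; rewrite -[in leRHS](card_ord M) -prodr_const bigA_distr_bigA mulr_sumr.
rewrite [leRHS](bigID (fun f : {ffun 'I_M -> 'I_K} => c <= \sum_(i < M) g (f i))) /=.
rewrite -[leLHS]addr0; apply: lerD; last first.
  apply: sumr_ge0 => f _; rewrite mulr_ge0 ?expR_ge0 //.
  by apply: prodr_ge0 => i _; rewrite mulr_ge0 ?expR_ge0.
apply: ler_sum => f cle; rewrite big_split /= -expR_sum mulrCA.
rewrite -[leLHS]mulr1 ler_wpM2l ?prodr_ge0 // -expRD -expR0 ler_expR.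
by rewrite addrC subr_ge0.
Qed.

Definition prefix_determined (M : nat) (A : pred (nat -> nat)) : Prop :=
  forall g h : nat -> nat, (forall i, (i < M)%N -> g i = h i) -> A g = A h.

Definition seq_of_ffun {M K : nat} (f : {ffun 'I_M -> 'I_K}) : nat -> nat :=
  fun i => oapp (fun j : 'I_M => nat_of_ord (f j)) 0%N (insub i).

Lemma seq_of_ffunE {M K : nat} (f : {ffun 'I_M -> 'I_K}) (i : 'I_M) :
  seq_of_ffun f i = f i.
Proof. by rewrite /seq_of_ffun valK. Qed.

Section IidGeometric.
Context {R : realType} {d : measure_display} {T : measurableType d}.
Context {P : probability T R} {p : R} {N : nat -> T -> nat}.
Hypothesis p01 : 0 < p < 1.
Hypothesis N_iid : iid_geometric P p N.

Definition cylinder {M : nat} (a : 'I_M -> nat) : set T :=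
  [set w | forall i : 'I_M, N i w = a i].

Lemma measurable_cylinder {M : nat} (a : 'I_M -> nat) : measurable (cylinder a).
Proof. by have [] := N_iid _ a. Qed.

Lemma prob_cylinder {M : nat} (a : 'I_M -> nat) :
  P (cylinder a) = (\prod_(i < M) geom_pmf p (a i))%:E.
Proof. by have [] := N_iid _ a. Qed.

Lemma prob_bigcup_cylinder {M K : nat} (Q : pred {ffun 'I_M -> 'I_K}) :
  P (\bigcup_(f in [set` Q]) cylinder (fun i => f i)) =
  (\sum_(f | Q f) \prod_(i < M) geom_pmf p (f i))%:E.
Proof.
rewrite measure_fin_bigcup //; last by move=> f _; exact: measurable_cylinder.
- rewrite -(bigfs _ (index_enum_uniq _)); last by move=> f _; rewrite mem_index_enum.
  by rewrite -sumEFin; apply: eq_bigr => f _; exact: prob_cylinder.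
apply/trivIsetP => f g _ _; apply: contraNeq => /set0P[w [fw gw]].
by apply/eqP/ffunP => i; apply: ord_inj; rewrite -fw -gw.
Qed.

Section PrefixEvent.
Variables (M : nat) (A : pred (nat -> nat)).

Let trunc (K : nat) : set T := [set w | A (N^~ w) /\ forall i : 'I_M, (N i w < K)%N].

Lemma prefix_event_bigcup : [set w | A (N^~ w)] = \bigcup_K trunc K.
Proof.
apply/seteqP; split => [w Aw|w [K _ []//]].
exists (\sum_(i < M) N i w).+1 => //; split => // i.
by rewrite ltnS (bigD1 i) //= leq_addr.
Qed.

Hypothesis A_prefix : prefix_determined M A.

Lemma prefix_event_truncE (K : nat) :
  trunc K = \bigcup_(f in [set` fun f : {ffun 'I_M -> 'I_K} => A (seq_of_ffun f)])
              cylinder (fun i => f i).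
Proof.
apply/seteqP; split => w /=.
  move=> [Aw NK]; exists [ffun i => Ordinal (NK i)]; last by move=> i; rewrite ffunE.
  rewrite /mkset unfold_in -(A_prefix (N^~ w)) // => i iM.
  by rewrite -[i]/(val (Ordinal iM)) seq_of_ffunE ffunE.
move=> [f]; rewrite /mkset unfold_in => Af Nf; split=> [|i]; last by rewrite Nf.
rewrite (A_prefix _ (seq_of_ffun f)) // => i iM.
by rewrite -[i]/(val (Ordinal iM)) seq_of_ffunE Nf.
Qed.

Lemma measurable_prefix_trunc (K : nat) : measurable (trunc K).
Proof.
rewrite prefix_event_truncE.
by apply: fin_bigcup_measurable => [|f _]; [exact: finite_finset|exact: measurable_cylinder].
Qed.

Lemma measurable_prefix_event : measurable [set w | A (N^~ w)].
Proof. by rewrite prefix_event_bigcup; exact: bigcupT_measurable measurable_prefix_trunc. Qed.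

Lemma prob_prefix_event_le (b : R) :
  (\forall K \near \oo, \sum_(f : {ffun 'I_M -> 'I_K} | A (seq_of_ffun f))
                          \prod_(i < M) geom_pmf p (f i) <= b) ->
  (P [set w | A (N^~ w)] <= b%:E)%E.
Proof.
move=> sum_le; have trunc_nd : nondecreasing_seq trunc.
  apply/nondecreasing_seqP => K; apply/subsetPset; rewrite /trunc => w /= [Aw NK].
  by split => // i; exact: ltnW (NK i).
rewrite prefix_event_bigcup.
apply: cvge_to_le (nondecreasing_cvg_mu measurable_prefix_trunc _ trunc_nd) _.
  exact: bigcupT_measurable measurable_prefix_trunc.
move: sum_le; apply: filterS => K.
by rewrite /= prefix_event_truncE prob_bigcup_cylinder lee_fin.
Qed.

End PrefixEvent.

Lemma measurable_sumn_event (m : nat) (E : pred nat) :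
  measurable [set w | E (\sum_(i < m) N i w)%N].
Proof.
apply: (measurable_prefix_event m (fun g => E (\sum_(i < m) g i)%N)) => g h gh.
by congr E; apply: eq_bigr => i _; exact: gh.
Qed.

Lemma measurable_sum_event (m : nat) (E : pred R) (h : nat -> R) :
  measurable [set w | E (\sum_(i < m) h (N i w))].
Proof.
apply: (measurable_prefix_event m (fun g => E (\sum_(i < m) h (g i)))).
by move=> g g' gg'; congr E; apply: eq_bigr => i _; rewrite gg'.
Qed.

Lemma prob_pred_N0E {C : pred nat} {J K : nat} :
  (forall j, C j -> (j < J)%N) -> (J <= K)%N ->
  P [set w | C (N 0%N w)] = (\sum_(j < K | C j) geom_pmf p j)%:E.
Proof.
move=> CJ JK.
have C_prefix : prefix_determined 1 (fun g => C (g 0%N)) by move=> g h /(_ 0%N isT) ->.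
have -> : [set w | C (N 0%N w)] =
    [set w | C (N 0%N w) /\ forall i : 'I_1, (N i w < K)%N].
  apply/seteqP; split => [w Cw|w []//]; split => // i.
  by rewrite (ord1 i); exact: leq_trans (CJ _ Cw) JK.
rewrite (prefix_event_truncE _ _ C_prefix) prob_bigcup_cylinder; congr (_%:E).
rewrite big_mkcond [RHS]big_mkcond /=.
have := @bigA_distr_bigA R 0 1 *%R +%R 'I_1 'I_K
  (fun _ j => if C j then geom_pmf p j else 0).
rewrite big_ord1 => ->; apply: eq_bigr => f _.
by rewrite !big_ord1 (seq_of_ffunE f ord0).
Qed.

Lemma chernoff_iid_geometric (g : nat -> R) (c b : R) (m : nat) :
  (\forall K \near \oo, \sum_(j < K) geom_pmf p j * expR (g j) <= b) ->
  (P [set w | (c <= \sum_(i < m) g (N i w))%R] <= (expR (- c) * b ^+ m)%:E)%E.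
Proof.
move=> mgf_le.
have A_prefix : prefix_determined m (fun h => c <= \sum_(i < m) g (h i)).
  by move=> h h' hh'; congr (_ <= _); apply: eq_bigr => i _; rewrite hh'.
apply: (prob_prefix_event_le _ _ A_prefix); move: mgf_le; apply: filterS => K mgfK.
have seqE (f : {ffun 'I_m -> 'I_K}) :
    (c <= \sum_(i < m) g (seq_of_ffun f i)) = (c <= \sum_(i < m) g (f i)).
  by congr (_ <= _); apply: eq_bigr => i _; rewrite seq_of_ffunE.
rewrite (eq_bigl _ _ seqE).
apply: le_trans (finite_chernoff m K _ g c (geom_pmf_ge0 p01)) _.
have mgf0 : 0 <= \sum_(j < K) geom_pmf p j * expR (g j).
  by apply: sumr_ge0 => j _; rewrite mulr_ge0 ?expR_ge0 ?(geom_pmf_ge0 p01).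
apply: ler_wpM2l; first exact: expR_ge0.
by apply: lerXn2r; rewrite ?nnegrE //; exact: le_trans mgfK.
Qed.

Lemma prob_sum_le_tail (n m : nat) (dl : R) :
  0 < dl <= 1 / 4 -> n%:R * p * (1 + dl) <= m%:R ->
  (P [set w | (\sum_(i < m) N i w <= n)%N] <=
   (expR (- (n%:R * p * dl ^+ 2 / 5)))%:E)%E.
Proof.
case/andP: p01 => p0 p1 /andP[dl0 dl1] m_ge; set l := dl / 2 * p.
have l0 : 0 < l by rewrite /l; apply: mulr_gt0 => //; lra.
have -> : [set w | (\sum_(i < m) N i w <= n)%N] =
    [set w | - (n%:R * l) <= \sum_(i < m) (fun j : nat => - (j%:R * l)) (N i w)].
  apply: eq_set => w.
  by rewrite sumrN -mulr_suml -natr_sum lerN2 ler_pM2r // ler_nat.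
have mgf_le : \forall K \near \oo, \sum_(j < K) geom_pmf p j * expR (- (j%:R * l)) <=
                                  expR (- (dl / 2 / (1 + dl / 2))).
  by apply: nearW => K; apply: geom_mgf_neg_le => //; lra.
apply: le_trans (chernoff_iid_geometric (fun j : nat => - (j%:R * l)) _ _ m mgf_le) _.
rewrite lee_fin opprK -expRM_natl -expRD ler_expR.
have m_gain : n%:R * p * (1 + dl) * (dl / 2 / (1 + dl / 2)) <= m%:R * (dl / 2 / (1 + dl / 2)).
  by apply: ler_wpM2r => //; apply: divr_ge0; lra.
have -> : n%:R * l =
    n%:R * p * (1 + dl) * (dl / 2 / (1 + dl / 2)) - n%:R * p * dl ^+ 2 / (4 + 2 * dl).
  by rewrite /l; field; lra.
have np0 : 0 <= n%:R * p * dl ^+ 2 by rewrite !mulr_ge0 ?sqr_ge0 // ltW.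
suff : n%:R * p * dl ^+ 2 / 5 <= n%:R * p * dl ^+ 2 / (4 + 2 * dl) by lra.
have inv_le : 5^-1 <= (4 + 2 * dl)^-1 :> R by rewrite lef_pV2 ?posrE; lra.
by rewrite -subr_ge0 -mulrBr mulr_ge0 // subr_ge0.
Qed.

Lemma prob_sum_ge_tail (n m : nat) (dl : R) :
  0 < dl <= 1 / 4 -> m%:R <= n%:R * p * (1 - dl) ->
  (P [set w | (n <= \sum_(i < m) N i w)%N] <=
   (expR (- (n%:R * p * dl ^+ 2 / 5)))%:E)%E.
Proof.
case/andP: p01 => p0 p1 /andP[dl0 dl1] m_le; set l := dl / 2 * p.
have l0 : 0 < l by rewrite /l; apply: mulr_gt0 => //; lra.
have -> : [set w | (n <= \sum_(i < m) N i w)%N] =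
    [set w | n%:R * l <= \sum_(i < m) (fun j : nat => j%:R * l) (N i w)].
  by apply: eq_set => w; rewrite -mulr_suml -natr_sum ler_pM2r // ler_nat.
have mgf_le : \forall K \near \oo, \sum_(j < K) geom_pmf p j * expR (j%:R * l) <=
                                  expR (dl / 2 / (1 - dl / 2)).
  by apply: nearW => K; apply: geom_mgf_pos_le => //; apply/andP; split; lra.
apply: le_trans (chernoff_iid_geometric (fun j : nat => j%:R * l) _ _ m mgf_le) _.
rewrite lee_fin -expRM_natl -expRD ler_expR.
have m_loss : m%:R * (dl / 2 / (1 - dl / 2)) <= n%:R * p * (1 - dl) * (dl / 2 / (1 - dl / 2)).
  by apply: ler_wpM2r => //; apply: divr_ge0; lra.
have -> : n%:R * l =
    n%:R * p * (1 - dl) * (dl / 2 / (1 - dl / 2)) + n%:R * p * dl ^+ 2 / (4 - 2 * dl).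
  by rewrite /l; field; lra.
have np0 : 0 <= n%:R * p * dl ^+ 2 by rewrite !mulr_ge0 ?sqr_ge0 // ltW.
suff : n%:R * p * dl ^+ 2 / 5 <= n%:R * p * dl ^+ 2 / (4 - 2 * dl) by lra.
have inv_le : 5^-1 <= (4 - 2 * dl)^-1 :> R by rewrite lef_pV2 ?posrE; lra.
by rewrite -subr_ge0 -mulrBr mulr_ge0 // subr_ge0.
Qed.

Section ClassCount.
Context {C : pred nat} {J : nat}.
Hypothesis C_bounded : forall j, C j -> (j < J)%N.

Let q := fine (P [set w | C (N 0%N w)]).

Lemma class_prob_itv : 0 <= q <= 1.
Proof.
rewrite /q (prob_pred_N0E C_bounded (leqnn J)) /=.
have pmf0 := geom_pmf_ge0 p01.
rewrite sumr_ge0 //=; apply: le_trans (sum_geom_pmf_le1 p01 J).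
by rewrite [leRHS](bigID (fun j : 'I_J => C j)) /= lerDl sumr_ge0.
Qed.

Lemma class_mgf_le (a : R) :
  \forall K \near \oo, \sum_(j < K) geom_pmf p j * expR (a * (C j)%:R) <=
                       expR ((expR a - 1) * q).
Proof.
exists J => // K /= JK; rewrite /q (prob_pred_N0E C_bounded JK) /=.
exact: geom_mgf_indicator_le.
Qed.

Lemma prob_count_ge_tail (m : nat) (lam s : R) : 0 < lam <= 1 / 2 ->
  (P [set w | (m%:R * q + s <= \sum_(i < m) (C (N i w))%:R)%R] <=
   (expR (2 * m%:R * lam ^+ 2 - lam * s))%:E)%E.
Proof.
case/andP => lam0 lam1; have /andP[q0 q1] := class_prob_itv.
have -> : [set w | m%:R * q + s <= \sum_(i < m) (C (N i w))%:R] =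
    [set w | lam * (m%:R * q + s) <= \sum_(i < m) (fun j => lam * (C j)%:R) (N i w)].
  by apply: eq_set => w; rewrite -mulr_sumr ler_pM2l.
apply: le_trans (chernoff_iid_geometric (fun j => lam * (C j)%:R) (lam * (m%:R * q + s))
                   _ m (class_mgf_le lam)) _.
rewrite lee_fin -expRM_natl -expRD ler_expR.
have qE : q * (expR lam - 1 - lam) <= 2 * lam ^+ 2.
  by have := expR_ge1Dx lam; have := expR_le1Dx_sqr lam lam1; nra.
by have := ler0n R m; nra.
Qed.

Lemma prob_count_le_tail (m : nat) (lam s : R) : 0 < lam <= 1 / 2 ->
  (P [set w | (\sum_(i < m) (C (N i w))%:R <= m%:R * q - s)%R] <=
   (expR (2 * m%:R * lam ^+ 2 - lam * s))%:E)%E.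
Proof.
case/andP => lam0 lam1; have /andP[q0 q1] := class_prob_itv.
have -> : [set w | \sum_(i < m) (C (N i w))%:R <= m%:R * q - s] =
    [set w | - lam * (m%:R * q - s) <= \sum_(i < m) (fun j => - lam * (C j)%:R) (N i w)].
  by apply: eq_set => w; rewrite -mulr_sumr !mulNr lerN2 ler_pM2l.
apply: le_trans (chernoff_iid_geometric (fun j => - lam * (C j)%:R) (- lam * (m%:R * q - s))
                   _ m (class_mgf_le (- lam))) _.
rewrite lee_fin -expRM_natl -expRD ler_expR.
have qE : q * (expR (- lam) - 1 + lam) <= 2 * lam ^+ 2.
  have lam_le : - lam <= 1 / 2 by lra.
  have := expR_ge1Dx (- lam); have := expR_le1Dx_sqr (- lam) lam_le.
  by rewrite sqrrN; nra.
by have := ler0n R m; nra.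
Qed.

End ClassCount.

End IidGeometric.

(** * Concentration of the number of class-k fragments *)

Lemma chernoff_count_exponent_le {R : realFieldType} (mu e eps m : R) :
  0 <= mu -> 0 <= e <= eps -> m <= 2 * mu ->
  2 * m * (e / 16) ^+ 2 - e / 16 * (eps * mu / 2) <= - (mu * e ^+ 2 / 80).
Proof.
move=> mu0 /andP[e0 e_eps] m_le.
have e_mu : e * mu * e <= e * mu * eps by rewrite ler_wpM2l ?mulr_ge0.
by have := sqr_ge0 e; nra.
Qed.

Section CardYk.
Context {R : realType} {d : measure_display} {T : measurableType d}.
Context {P : probability T R} {p : R} {N : nat -> T -> nat}.
Hypothesis p01 : 0 < p < 1.
Hypothesis N_iid : iid_geometric P p N.
Variables (n L k : nat).

Let C := @in_class R n L k.
Let q := fine (P [set w | C (N 0%N w)]).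

Lemma measurable_card_Yk_event (A : pred nat) :
  measurable [set w | A (@card_Yk R n L k (N^~ w))].
Proof.
apply: (measurable_prefix_event N_iid n.+1 (fun g => A (card_Yk n L k g))).
by move=> g h gh; rewrite (eq_card_Yk n L k gh).
Qed.

Lemma prob_card_Yk_deviation_le_sum (mu eps s : R) (m1 m2 : nat) :
  (0 < m2)%N -> (m2 <= n)%N -> (m1 < n)%N ->
  (m2%:R - mu) * q <= eps * mu - s -> (mu - m1.+1%:R) * q <= eps * mu - s ->
  (P [set w | (eps * mu < `|(@card_Yk R n L k (N^~ w))%:R - mu * q|)%R] <=
   P [set w | (\sum_(i < m2) N i w <= n)%N] + P [set w | (n <= \sum_(i < m1) N i w)%N] +
   P [set w | (m2%:R * q + s <= \sum_(i < m2) (C (N i w))%:R)%R] +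
   P [set w | (\sum_(i < m1.+1) (C (N i w))%:R <= m1.+1%:R * q - s)%R])%E.
Proof.
move=> m20 m2n m1n dev2 dev1.
have /andP[q0 _] : 0 <= q <= 1 := class_prob_itv p01 N_iid (in_class_lt n L k).
set E1 := [set w | (\sum_(i < m2) N i w <= n)%N].
set E2 := [set w | (n <= \sum_(i < m1) N i w)%N].
set E3 := [set w | (m2%:R * q + s <= \sum_(i < m2) (C (N i w))%:R)%R].
set E4 := [set w | (\sum_(i < m1.+1) (C (N i w))%:R <= m1.+1%:R * q - s)%R].
have mE1 : measurable E1 := measurable_sumn_event N_iid m2 (fun x => x <= n)%N.
have mE2 : measurable E2 := measurable_sumn_event N_iid m1 (fun x => n <= x)%N.
have mE3 : measurable E3 :=
  measurable_sum_event N_iid m2 (fun x => m2%:R * q + s <= x) (fun j => (C j)%:R).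
have mE4 : measurable E4 :=
  measurable_sum_event N_iid m1.+1 (fun x => x <= m1.+1%:R * q - s) (fun j => (C j)%:R).
have cover : [set w | eps * mu < `|(@card_Yk R n L k (N^~ w))%:R - mu * q|] `<=`
    E1 `|` E2 `|` E3 `|` E4.
  move=> w dev.
  case: (count_frags_deviation C (N^~ w) m20 m2n m1n q0 dev2 dev1 dev) => tail.
  - by left; left; left.
  - by left; left; right.
  - by left; right.
  - by right.
apply: le_trans (le_measure _ _ _ cover) _; rewrite ?inE.
- exact: (measurable_card_Yk_event (fun c => eps * mu < `|c%:R - mu * q|)).
- by repeat apply: measurableU.
apply: le_trans (measureU2 P (measurableU _ _ (measurableU _ _ mE1 mE2) mE3) mE4) _.
apply: leeD => //; apply: le_trans (measureU2 P (measurableU _ _ mE1 mE2) mE3) _.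
by apply: leeD => //; exact: measureU2.
Qed.

Lemma card_Yk_deviation_le (eps : R) :
  0 < eps -> p <= 1 / 4 -> 2 <= n%:R * p -> 4 <= eps * (n%:R * p) ->
  (P [set w | (eps * (n%:R * p) < `|(@card_Yk R n L k (N^~ w))%:R - n%:R * p * q|)%R] <=
   (4 * expR (- (n%:R * p * Num.min eps 1 ^+ 2 / 80)))%:E)%E.
Proof.
move=> eps0 p_le; set mu := n%:R * p => mu2 eps_mu; have [p0 p1] := andP p01.
set e := Num.min eps 1; set dl := e / 4; set s := eps * mu / 2; set lam := e / 16.
have e0 : 0 < e by rewrite lt_min eps0 ltr01.
have [e1 e_eps] : e <= 1 /\ e <= eps by split; rewrite ge_min lexx ?orbT.
have dl01 : 0 < dl <= 1 / 4 by apply/andP; split; rewrite /dl; lra.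
have lam01 : 0 < lam <= 1 / 2 by apply/andP; split; rewrite /lam; lra.
have /andP[q0 q1] : 0 <= q <= 1 := class_prob_itv p01 N_iid (in_class_lt n L k).
pose m2 := (Num.truncn (mu * (1 + dl))).+1; pose m1 := Num.truncn (mu * (1 - dl)).
have /andP[m2_lo m2_hi] : mu * (1 + dl) < m2%:R <= mu * (1 + dl) + 1.
  have : 0 <= mu * (1 + dl) by nra.
  by move=> /truncn_itv/andP[lo hi]; rewrite /m2 hi -natr1 lerD2r.
have /andP[m1_lo m1_hi] : mu * (1 - dl) - 1 < m1%:R <= mu * (1 - dl).
  have : 0 <= mu * (1 - dl) by nra.
  by move=> /truncn_itv/andP[lo hi]; rewrite /m1 lo andbT ltrBlDr natr1.
have muE : mu = n%:R * p by [].
have n2 : 2 <= n%:R :> R by have := ler0n R n; nra.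
have m2n : (m2 <= n)%N by rewrite -(ler_nat R); nra.
have m1n : (m1 < n)%N by rewrite -(ltr_nat R); nra.
have mu_dl : 0 <= mu * dl <= eps * mu / 4 by apply/andP; split; rewrite /dl; nra.
have dev2 : (m2%:R - mu) * q <= eps * mu - s.
  have [gap0 gap] : 0 <= m2%:R - mu /\ m2%:R - mu <= eps * mu / 2 by split; lra.
  by rewrite /s; nra.
have dev1 : (mu - m1.+1%:R) * q <= eps * mu - s.
  have gap : mu - m1.+1%:R <= eps * mu / 2 by rewrite -natr1; lra.
  by rewrite /s; nra.
(* With dl = e / 4 and lam = e / 16 all four Chernoff exponents are at most
   - mu e^2 / 80. *)
set bound := expR (- (mu * e ^+ 2 / 80)).
have sum_tail_le : ((expR (- (mu * dl ^+ 2 / 5)))%:E <= bound%:E)%E.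
  by rewrite lee_fin ler_expR /dl le_eqVlt; apply/orP; left; apply/eqP; field.
have count_tail_le m : m%:R <= 2 * mu ->
    ((expR (2 * m%:R * lam ^+ 2 - lam * s))%:E <= bound%:E)%E.
  move=> m_le; rewrite lee_fin ler_expR.
  by apply: chernoff_count_exponent_le m_le; [lra | rewrite (ltW e0) e_eps].
apply: le_trans (prob_card_Yk_deviation_le_sum mu eps s m1 m2 isT m2n m1n dev2 dev1) _.
have -> : (4 * bound)%:E = (bound%:E + bound%:E + bound%:E + bound%:E)%E.
  by rewrite -!EFinD; congr (_%:E); ring.
repeat apply: leeD.
- exact: le_trans (prob_sum_le_tail p01 N_iid n m2 dl dl01 (ltW m2_lo)) sum_tail_le.
- exact: le_trans (prob_sum_ge_tail p01 N_iid n m1 dl dl01 m1_hi) sum_tail_le.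
- apply: le_trans (prob_count_ge_tail p01 N_iid (in_class_lt n L k) m2 lam s lam01) _.
  by apply: count_tail_le; nra.
- apply: le_trans (prob_count_le_tail p01 N_iid (in_class_lt n L k) m1.+1 lam s lam01) _.
  by apply: count_tail_le; rewrite -natr1; lra.
Qed.

Lemma card_Yk_concentration (eps : R) : 0 < eps -> p <= 1 / 4 ->
  20 * p * eps ^+ 2 <= Num.min eps 1 ^+ 2 -> p * eps ^+ 2 * (4 / eps + 2) <= 1 ->
  (P [set w | (eps * n%:R * p < `|(@card_Yk R n L k (N^~ w))%:R - n%:R * p * q|)%R] <=
   (4 * expR (- (n%:R * p ^+ 2 * eps ^+ 2) / 4))%:E)%E.
Proof.
move=> eps0 p_le p_eps1 p_eps2; have [p0 _] := andP p01.
rewrite -[eps * n%:R * p]mulrA.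
set x := n%:R * p ^+ 2 * eps ^+ 2.
have [B_ge1|B_lt1] := leP 1 (4 * expR (- x / 4)).
  apply: le_trans (probability_le1 P _) _; last by rewrite lee_fin.
  exact: (measurable_card_Yk_event (fun c => eps * (n%:R * p) < `|c%:R - n%:R * p * q|)).
have mu_large : 4 / eps + 2 <= n%:R * p.
  rewrite leNgt; apply/negP => mu_small.
  have x_le1 : x <= 1.
    have pe0 : 0 <= p * eps ^+ 2 by rewrite mulr_ge0 ?sqr_ge0 ?ltW.
    by rewrite /x; nra.
  by have := expR_ge1Dx (- x / 4); lra.
have mu2 : 2 <= n%:R * p by have := divr_gt0 (ltr0n R 4) eps0; lra.
have eps_mu : 4 <= eps * (n%:R * p).
  have : eps * (4 / eps) = 4 by field; lra.
  nra.
apply: le_trans (card_Yk_deviation_le eps eps0 p_le mu2 eps_mu) _.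
rewrite lee_fin ler_pM2l // ler_expR /x.
have : 0 <= n%:R * p * (Num.min eps 1 ^+ 2 - 20 * p * eps ^+ 2).
  by rewrite !mulr_ge0 ?subr_ge0 // ltW.
lra.
Qed.

End CardYk.

Lemma cvg_mul_log2_eventually_le {R : realType} (p : nat -> R) (alpha kap : R) :
  (fun n : nat => p n * log2 (n%:R : R)) @ \oo --> alpha -> 0 < kap ->
  \forall n \near \oo, p n <= kap.
Proof.
move=> cvg_alpha kap0; set A := `|alpha| + 1.
have A0 : 0 < A by rewrite /A; have := normr_ge0 alpha; lra.
have ln2 : 0 < ln (2 : R) by rewrite ln_gt0 //; lra.
near=> n.
have close : `|alpha - p n * log2 (n%:R : R)| < 1.
  by near: n; exact: cvgr_dist_lt cvg_alpha _ ltr01.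
have n_ge : expR (A * ln 2 / kap) <= n%:R by near: n; exact: nbhs_infty_ger.
have log_ge : A / kap <= log2 (n%:R : R).
  rewrite /log2 ler_pdivlMr // mulrAC -[leLHS]expRK ler_ln ?posrE ?expR_gt0 //.
  exact: lt_le_trans (expR_gt0 _) n_ge.
have log_gt0 : 0 < log2 (n%:R : R) by apply: lt_le_trans log_ge; exact: divr_gt0.
have A_le : A <= kap * log2 (n%:R : R) by rewrite mulrC -ler_pdivrMr.
move: close; rewrite ltr_norml => /andP[close _].
by have := ler_norm alpha; rewrite /A in A_le; nra.
Unshelve. all: by end_near.
Qed.

Theorem lemma1 (R : realType) (d : measure_display) (T : measurableType d)
  (P : probability T R) (p : nat -> R) (alpha : R) (N : nat -> nat -> T -> nat)
  (L k : nat) (eps : R) :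
  (forall n, 0 < p n < 1) ->
  (fun n : nat => p n * log2 (n%:R : R)) @ \oo --> alpha ->
  (forall n, iid_geometric P (p n) (N n)) ->
  (0 < L)%N -> (0 < k)%N -> 0 < eps ->
  \forall n \near \oo,
    let q := fine (P [set w | @in_class R n L k (N n 0%N w)]) in
    (P [set w | (eps * n%:R * p n <
                Num.norm ((@card_Yk R n L k (fun i => N n i w))%:R - n%:R * p n * q))%R] <=
     (4 * expR (- (n%:R * p n ^+ 2 * eps ^+ 2) / 4))%:E)%E.
Proof.
(* The argument works for any length class: [L] and [k] need not be positive. *)
move=> p01 p_log2 N_iid _ _ eps0.
have p_small kap : 0 < kap -> \forall n \near \oo, p n <= kap.
  exact: cvg_mul_log2_eventually_le p_log2.
have e0 : 0 < Num.min eps 1 by rewrite lt_min eps0 ltr01.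
have eps_inv : 0 < 4 / eps + 2 by have := divr_gt0 (ltr0n R 4) eps0; lra.
have eps2 : 0 < eps ^+ 2 by exact: exprn_gt0.
near=> n.
apply: (card_Yk_concentration (p01 n) (N_iid n) n L k eps eps0).
- by near: n; apply: p_small; lra.
- have : p n <= Num.min eps 1 ^+ 2 / (20 * eps ^+ 2).
    by near: n; apply: p_small; rewrite divr_gt0 ?exprn_gt0 ?mulr_gt0.
  by rewrite ler_pdivlMr ?mulr_gt0 //; lra.
- have : p n <= (eps ^+ 2 * (4 / eps + 2))^-1.
    by near: n; apply: p_small; rewrite invr_gt0 mulr_gt0.
  by rewrite -mulrA -ler_pdivlMr ?mulr_gt0 // mul1r.
Unshelve. all: by end_near.
Qed.
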